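(* Let $p\ge1$ and let $u,v\in E_1$ be such that $\Gamma^p_u$ is isomorphic to $\Gamma^p_v$ (as unrooted graphs). Then the sequences $\mathcal L^u$ and $\mathcal L^v$ are compatible.
   Context: $X=\{0,\dots,p\}$; $\mathcal G_{S_p}$ is generated by $e_1,\dots,e_p$ acting on $X^\infty$ by $e_i(0w)=i\,e_i(w)$, $e_i(iw)=0w$, $e_i(jw)=jw$ for $j\notin\{0,i\}$; $\Gamma^p_u$ is the Schreier graph on the orbit of $u$ (edges $x$—$e_i(x)$). $E_1$ is the set of $w\in X^\infty$ with $\Gamma^p_w$ one-ended; every $w\in E_1$ has an infinite decomposition $w=0^ka_1u_1a_2u_2\cdots$ with $k\ge0$, $a_j\in\{1,\dots,p\}$, $a_{j+1}\ne a_j$, $u_j\in\{0,a_j\}^\ast$ finite. With $N_j=k+j+\sum_{\ell\le j}|u_\ell|$, the path of cycles of $w$ consists of the $e_{a_j}$-cycles with vertex sets $\{0,a_j\}^{N_j}a_{j+1}u_{j+1}a_{j+2}u_{j+2}\cdots$, and $\mathcal L^w=(2^{N_j})_{j\ge1}$ is the sequence of their lengths. Two integer sequences $(x_i),(y_i)$ are compatible if there exist $l,h\in\mathbb N$ with $x_{l+n}=y_{h+n}$ for all $n\in\mathbb N$. *)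

From Stdlib Require Import Relations List.
From mathcomp Require Import all_boot.
Set Implicit Arguments. Unset Strict Implicit. Unset Printing Implicit Defensive.

(* Alphabet X = {0,...,p} is 'I_p.+1 ; infinite words X^oo are nat -> 'I_p.+1. *)
Definition word (p : nat) := nat -> 'I_p.+1.

Definition allzero_before p (w : word p) (n : nat) : bool :=
  all (fun m => w m == ord0) (iota 0 n).

(* The generator e_i (for i <> 0), unfolding the recursion
   e_i(0w) = i e_i(w), e_i(iw) = 0w, e_i(jw) = jw (j not in {0,i}):
   every leading 0 becomes i; the first nonzero letter, if equal to i,
   becomes 0; everything else is unchanged. *)
Definition gen_e p (i : 'I_p.+1) (w : word p) : word p := fun n =>
  if allzero_before w n then
    (if w n == ord0 then i else if w n == i then ord0 else w n)
  else w n.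

Definition adj p (x y : word p) : Prop :=
  exists i : 'I_p.+1, i != ord0 /\ (y = gen_e i x \/ x = gen_e i y).

Definition reach p (u y : word p) : Prop := @clos_refl_trans (word p) (@adj p) u y.

Definition reach_avoid p (K : seq (word p)) (x y : word p) : Prop :=
  @clos_refl_trans (word p)
    (fun a b => adj a b /\ ~ List.In a K /\ ~ List.In b K) x y.

Definition finite_set p (S : word p -> Prop) : Prop :=
  exists s : seq (word p), forall x, S x -> List.In x s.

Definition one_ended p (w : word p) : Prop :=
  forall K : seq (word p),
    (exists x, reach w x /\ ~ List.In x K /\ ~ finite_set (reach_avoid K x)) /\
    (forall x y, reach w x -> ~ List.In x K -> ~ finite_set (reach_avoid K x) ->
                 reach w y -> ~ List.In y K -> ~ finite_set (reach_avoid K y) ->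
                 reach_avoid K x y).

(* Isomorphism of unrooted Schreier graphs, as (undirected) multigraphs with
   loops: vertex set = orbit, edges = pairs (x,i), x in orbit, 1<=i<=p, with
   endpoints {x, e_i x}. *)
Definition schreier_iso p (u v : word p) : Prop :=
  exists (f : word p -> word p)
         (g : word p * 'I_p.+1 -> word p * 'I_p.+1),
    (forall x, reach u x -> reach v (f x)) /\
    (forall x y, reach u x -> reach u y -> f x = f y -> x = y) /\
    (forall y, reach v y -> exists x, reach u x /\ f x = y) /\
    (forall x i, reach u x -> i != ord0 ->
        reach v (g (x, i)).1 /\ (g (x, i)).2 != ord0) /\
    (forall x i y j, reach u x -> i != ord0 -> reach u y -> j != ord0 ->
        g (x, i) = g (y, j) -> (x, i) = (y, j)) /\
    (forall y j, reach v y -> j != ord0 ->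
        exists x i, reach u x /\ i != ord0 /\ g (x, i) = (y, j)) /\
    (forall x i, reach u x -> i != ord0 ->
        let x' := (g (x, i)).1 in let i' := (g (x, i)).2 in
        (x' = f x /\ gen_e i' x' = f (gen_e i x)) \/
        (x' = f (gen_e i x) /\ gen_e i' x' = f x)).

(* Decomposition w = 0^k a_1 u_1 a_2 u_2 ... ; here a j, us j stand for
   a_{j+1}, u_{j+1} (0-based indexing). *)
Definition dec_prefix p (k : nat) (a : nat -> 'I_p.+1) (us : nat -> seq 'I_p.+1)
    (j : nat) : seq 'I_p.+1 :=
  nseq k ord0 ++ flatten [seq a l :: us l | l <- iota 0 j.+1].

Definition is_decomp p (w : word p) (k : nat) (a : nat -> 'I_p.+1)
    (us : nat -> seq 'I_p.+1) : Prop :=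
  (forall j, a j != ord0) /\
  (forall j, a j.+1 != a j) /\
  (forall j, all (fun c => (c == ord0) || (c == a j)) (us j)) /\
  (forall j n, n < size (dec_prefix k a us j) ->
               w n = nth ord0 (dec_prefix k a us j) n).

(* N_{j+1} = k + (j+1) + sum_{l <= j+1} |u_l| = size of the prefix;
   cycle_lengths j = 2^(N_{j+1}), i.e. L^w reindexed from 0. *)
Definition cycle_lengths p (k : nat) (a : nat -> 'I_p.+1)
    (us : nat -> seq 'I_p.+1) : nat -> nat :=
  fun j => 2 ^ size (dec_prefix k a us j).

Definition compatible (x y : nat -> nat) : Prop :=
  exists l h : nat, forall n, x (l + n) = y (h + n).

From Stdlib Require Import Relations List.
From mathcomp Require Import all_boot.
From Stdlib Require Import Classical ClassicalEpsilon FunctionalExtensionality.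
From mathcomp Require Import zify.
Set Implicit Arguments. Unset Strict Implicit. Unset Printing Implicit Defensive.

(* Call [n] a cut size at a vertex [x] if removing some vertex [z <> x]
   leaves [x] in a component with exactly [n] vertices; cut sizes are invariant under
   graph isomorphisms.  In the orbit of [w] with cycle positions [N_j], the vertex
   [0^(N_j) w_(>N_j)] of the j-th cycle cuts off the "lobe" of words that agree with [w]
   from position [N_j] on and whose last nonzero letter before it is that cycle's letter;
   it has [1 + (p+1) + ... + (p+1)^(N_j - 1)] vertices.  Any vertex [x] of the orbit
   agrees with [w] beyond some [N_J], and a cut vertex [z] that is neither one of the
   finitely many words agreeing with [w] beyond [N_(J+1)] nor one of these cycle
   vertices leaves [x] connected to all of them, hence on an infinite side.  So above
   some bound the cut sizes at [x] are exactly the lobe sizes, which are strictly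
   increasing in [N_j]; comparing them at [u] and at its image in the orbit of [v]
   shows that [(N_j)] and [(N'_j)] coincide after shifts. *)

Section Cardinality.
Variable T : Type.
Implicit Types (P Q : T -> Prop) (l : seq T).

Definition has_card P n :=
  exists l, [/\ NoDup l, length l = n & forall x, P x <-> In x l].

Lemma has_card_ext P Q n : (forall x, P x <-> Q x) -> has_card P n -> has_card Q n.
Proof. by move=> PQ [l [Ul El Pl]]; exists l; split=> // x; rewrite -PQ. Qed.

Lemma has_card_unique P n m : has_card P n -> has_card P m -> n = m.
Proof.
move=> [l1 [U1 <- P1]] [l2 [U2 <- P2]].
have /leP := NoDup_incl_length U1 (fun x => (P2 x).1 \o (P1 x).2).
have /leP := NoDup_incl_length U2 (fun x => (P1 x).1 \o (P2 x).2).
lia.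
Qed.

Lemma has_card0 P : (forall x, ~ P x) -> has_card P 0.
Proof. by move=> P0; exists [::]; split=> [|//|x]; [constructor | split=> [/P0|[]]]. Qed.

Lemma has_card1 (a : T) : has_card (eq^~ a) 1.
Proof.
exists [:: a]; split=> // [|x]; first by constructor; [case | constructor].
by split=> [->|[]//]; left.
Qed.

Lemma has_cardU P Q n m : (forall x, P x -> Q x -> False) ->
  has_card P n -> has_card Q m -> has_card (fun x => P x \/ Q x) (n + m).
Proof.
move=> PQ [l1 [U1 E1 P1]] [l2 [U2 E2 P2]]; exists (l1 ++ l2); split.
- by apply: NoDup_app => // x /P1 Px /P2; apply: PQ.
- by rewrite length_app E1 E2.
- by move=> x; rewrite in_app_iff P1 P2.
Qed.

Lemma has_card_no_inj_seq P n (h : nat -> T) :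
  has_card P n -> injective h -> ~ (forall i, P (h i)).
Proof.
move=> [l [_ _ Pl]] injh Ph.
have Uh : NoDup (List.map h (List.seq 0 (length l).+1)).
  by apply: NoDup_map_NoDup_ForallPairs; [move=> i j _ _; apply: injh | apply: seq_NoDup].
have Ih : incl (List.map h (List.seq 0 (length l).+1)) l.
  by move=> y /in_map_iff [i [<- _]]; apply/Pl.
have /leP := NoDup_incl_length Uh Ih.
by rewrite length_map length_seq; lia.
Qed.

Lemma has_card_bounded (C : T -> T -> Prop) l :
  exists B, forall z n, In z l -> has_card (C z) n -> n <= B.
Proof.
elim: l => [|z0 l [B HB]]; first by exists 0.
case: (classic (exists n0, has_card (C z0) n0)) => [[n0 Cn0]|noC].
  exists (maxn n0 B) => z n [<-|/HB zB] Cn.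
    by rewrite (has_card_unique Cn Cn0) leq_maxl.
  by rewrite (leq_trans (zB n Cn)) // leq_maxr.
exists B => z n [<- Cn|/HB zB /zB //]; by case: noC; exists n.
Qed.

End Cardinality.

Lemma has_card_image T U (f : T -> U) P n :
  (forall x y, P x -> P y -> f x = f y -> x = y) ->
  has_card P n -> has_card (fun y : U => exists2 x, P x & y = f x) n.
Proof.
move=> injf [l [Ul El Pl]]; exists (List.map f l); split.
- by apply: NoDup_map_NoDup_ForallPairs => // x y /Pl Px /Pl Py; apply: injf.
- by rewrite length_map.
- move=> y; rewrite in_map_iff; split=> [[x /Pl Px ->]|[x [<- /Pl Px]]].
    by exists x.
  by exists x.
Qed.

Section RestrictedConnectivity.
Variables (T : Type) (R : relation T).
Implicit Types (P Q : T -> Prop) (g : nat -> T).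

Definition conn_in P : relation T := @clos_refl_trans T (fun a b => R a b /\ P a /\ P b).

Definition cut_size (V : T -> Prop) x n :=
  exists z, [/\ V z, z <> x & has_card (conn_in (fun a => a <> z) x) n].

Lemma conn_in_edge P a b : R a b -> P a -> P b -> conn_in P a b.
Proof. by move=> ab Pa Pb; apply: rt_step. Qed.

Lemma conn_in_mono P Q a b : (forall x, P x -> Q x) -> conn_in P a b -> conn_in Q a b.
Proof.
move=> PQ; elim=> [x y [xy [Px Py]]|x|x y z _ xy _ yz].
- by apply: conn_in_edge => //; apply: PQ.
- exact: rt_refl.
- exact: rt_trans xy yz.
Qed.

Lemma conn_in_rt P a b : conn_in P a b -> clos_refl_trans T R a b.
Proof.
elim=> [x y [xy _]|x|x y z _ xy _ yz]; [exact: rt_step | exact: rt_refl | exact: rt_trans xy yz].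
Qed.

Lemma conn_in_path P g n1 n2 : n1 <= n2 ->
  (forall n, n1 <= n < n2 -> R (g n) (g n.+1)) -> (forall n, n1 <= n <= n2 -> P (g n)) ->
  conn_in P (g n1) (g n2).
Proof.
elim: n2 => [|n2 IH] le12 Rg Pg; first by rewrite (_ : n1 = 0); [apply: rt_refl | lia].
case: (eqVneq n1 n2.+1) => [->|ne12]; first exact: rt_refl.
apply: rt_trans (IH _ _ _) (conn_in_edge _ _ _).
- lia.
- by move=> n nn; apply: Rg; lia.
- by move=> n nn; apply: Pg; lia.
- by apply: Rg; lia.
- by apply: Pg; lia.
- by apply: Pg; lia.
Qed.

Hypothesis R_sym : forall a b, R a b -> R b a.

Lemma conn_in_sym P a b : conn_in P a b -> conn_in P b a.
Proof.
elim=> [x y [xy [Px Py]]|x|x y z _ yx _ zy].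
- exact: conn_in_edge (R_sym xy) Py Px.
- exact: rt_refl.
- exact: rt_trans zy yx.
Qed.

Lemma conn_in_cycle g L z n1 n2 :
  (forall n, n.+1 < L -> R (g n) (g n.+1)) -> R (g L.-1) (g 0) ->
  (forall n m, n < L -> m < L -> g n = g m -> n = m) ->
  n1 < L -> n2 < L -> g n1 <> z -> g n2 <> z ->
  conn_in (fun a => a <> z) (g n1) (g n2).
Proof.
move=> Rg Rwrap injg.
wlog le12 : n1 n2 / n1 <= n2 => [wlog_le L1 L2 z1 z2|L1 L2 z1 z2].
  case: (leqP n1 n2) => [le|/ltnW le]; first exact: wlog_le.
  by apply: conn_in_sym; apply: wlog_le.
case: (classic (exists2 nz, n1 < nz < n2 & g nz = z)) => [[nz nzP gz]|nozP].
- have gnz n : n < L -> n != nz -> g n <> z by rewrite -gz => nL /eqP nnz /injg; lia.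
  have to_end : conn_in (fun a => a <> z) (g n2) (g L.-1).
    apply: conn_in_path => [|n nn|n nn]; [lia | apply: Rg | apply: gnz]; lia.
  have from_start : conn_in (fun a => a <> z) (g 0) (g n1).
    apply: conn_in_path => [|n nn|n nn]; [lia | apply: Rg | apply: gnz]; lia.
  apply: conn_in_sym; apply: rt_trans to_end _; apply: rt_trans _ from_start.
  by apply: conn_in_edge Rwrap _ _; apply: gnz; lia.
- apply: conn_in_path => // [n nn|n nn gz]; first by apply: Rg; lia.
  case: (eqVneq n n1) => [e|ne1]; first by apply: z1; rewrite -e.
  case: (eqVneq n n2) => [e|ne2]; first by apply: z2; rewrite -e.
  by apply: nozP; exists n => //; lia.
Qed.

End RestrictedConnectivity.

Definition closed_under T (R : relation T) (V : T -> Prop) := forall x y, V x -> R x y -> V y.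

Definition graph_iso T1 T2 (R1 : relation T1) (V1 : T1 -> Prop)
    (R2 : relation T2) (V2 : T2 -> Prop) (f : T1 -> T2) :=
  [/\ forall x, V1 x -> V2 (f x),
      forall x y, V1 x -> V1 y -> f x = f y -> x = y,
      forall y, V2 y -> exists2 x, V1 x & f x = y &
      forall x y, V1 x -> V1 y -> R1 x y <-> R2 (f x) (f y)].

Section GraphIso.
Variables (T1 T2 : Type) (R1 : relation T1) (V1 : T1 -> Prop).
Variables (R2 : relation T2) (V2 : T2 -> Prop) (f : T1 -> T2).
Hypothesis f_iso : graph_iso R1 V1 R2 V2 f.

Lemma graph_iso_inv (x0 : T1) :
  exists g, graph_iso R2 V2 R1 V1 g /\ forall x, V1 x -> g (f x) = x.
Proof.
have [fV f_inj f_surj f_adj] := f_iso.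
pose g y := epsilon (inhabits x0) (fun x => V1 x /\ f x = y).
have gK y : V2 y -> V1 (g y) /\ f (g y) = y.
  move=> /f_surj [x Vx fx].
  exact: (epsilon_spec (inhabits x0) (fun x => V1 x /\ f x = y) (ex_intro _ x (conj Vx fx))).
have fK x : V1 x -> g (f x) = x.
  by move=> Vx; have [Vg fg] := gK _ (fV x Vx); apply: f_inj.
exists g; split=> //; split.
- by move=> y /gK [].
- by move=> y1 y2 /gK [_ e1] /gK [_ e2] e; rewrite -e1 -e2 e.
- by move=> x Vx; exists (f x); [apply: fV | apply: fK].
- move=> y1 y2 /gK [V1y1 e1] /gK [V1y2 e2].
  by rewrite f_adj // e1 e2.
Qed.

Hypotheses (V1_closed : closed_under R1 V1) (V2_closed : closed_under R2 V2).

Lemma conn_in_iso z a b : V1 z -> V1 a ->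
  conn_in R1 (fun x => x <> z) a b ->
  V1 b /\ conn_in R2 (fun y => y <> f z) (f a) (f b).
Proof.
have [_ f_inj _ f_adj] := f_iso.
move=> Vz + ab; elim: ab => [x y [xy [xz yz]]|x|x y w _ IHxy _ IHyw] Vx.
- have Vy := V1_closed Vx xy; split=> //.
  apply: conn_in_edge; first exact/f_adj.
  + by move/f_inj=> /(_ Vx Vz).
  + by move/f_inj=> /(_ Vy Vz).
- by split=> //; apply: rt_refl.
- have [Vy xy] := IHxy Vx; have [Vw yw] := IHyw Vy.
  by split=> //; apply: rt_trans xy yw.
Qed.

Lemma conn_in_iso_lift z a b' : V1 z -> V1 a ->
  conn_in R2 (fun y => y <> f z) (f a) b' ->
  exists2 b, V1 b /\ conn_in R1 (fun x => x <> z) a b & b' = f b.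
Proof.
have [fV _ f_surj f_adj] := f_iso.
move=> Vz Va; move e : (f a) => a' ab'.
elim: ab' a Va e => [x' y' [xy' [xz yz]]|x'|x' y' w' _ IHxy _ IHyw] x Vx ex.
- have Vy' : V2 y' by apply: V2_closed xy'; rewrite -ex; apply: fV.
  have [y Vy ey] := f_surj y' Vy'.
  exists y; last by [].
  split=> //; apply: conn_in_edge.
  + by apply/(f_adj _ _ Vx Vy); rewrite ex ey.
  + by move=> exz; apply: xz; rewrite -ex exz.
  + by move=> eyz; apply: yz; rewrite -ey eyz.
- by exists x => //; split=> //; apply: rt_refl.
- have [y [Vy xy] ey] := IHxy x Vx ex; have [w [Vw yw] ew] := IHyw y Vy (esym ey).
  by exists w => //; split=> //; apply: rt_trans xy yw.
Qed.

Lemma cut_size_iso x n : V1 x -> cut_size R1 V1 x n -> cut_size R2 V2 (f x) n.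
Proof.
have [fV f_inj _ _] := f_iso.
move=> Vx [z [Vz zx Cn]]; exists (f z); split; first exact: fV.
  by move/f_inj=> /(_ Vz Vx).
have {}Cn : has_card (fun b => V1 b /\ conn_in R1 (fun a => a <> z) x b) n.
  by apply: has_card_ext Cn => b; split=> [xb|[]//]; split=> //; apply: (conn_in_iso Vz Vx xb).1.
apply: has_card_ext (has_card_image _ Cn) => [y'|a b [Va _] [Vb _]]; last exact: f_inj.
split=> [[y [Vy xy] ->]|/(conn_in_iso_lift Vz Vx) [y yP ->]]; last by exists y.
exact: (conn_in_iso Vz Vx xy).2.
Qed.

End GraphIso.

Lemma cut_size_isoE T1 T2 (R1 : relation T1) V1 (R2 : relation T2) V2 f x n :
  closed_under R1 V1 -> closed_under R2 V2 -> graph_iso R1 V1 R2 V2 f -> V1 x ->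
  cut_size R1 V1 x n <-> cut_size R2 V2 (f x) n.
Proof.
move=> V1_closed V2_closed f_iso Vx; split; first exact: (cut_size_iso f_iso).
have [g [g_iso gK]] := graph_iso_inv f_iso x.
have [fV _ _ _] := f_iso.
by rewrite -{2}(gK x Vx); apply: (cut_size_iso g_iso) (fV x Vx).
Qed.

Lemma compatible_of_same_range (s s' : nat -> nat) B :
  (forall i, s i < s i.+1) -> (forall i, s' i < s' i.+1) ->
  (forall n, B < n -> (exists i, s i = n) <-> (exists i, s' i = n)) ->
  compatible s s'.
Proof.
move=> s_inc s'_inc same.
have s_mono := leq_mono (homo_ltn ltn_trans s_inc).
have s'_mono := leq_mono (homo_ltn ltn_trans s'_inc).
have s_ge i : i <= s i by elim: i => // i IH; apply: leq_ltn_trans IH (s_inc i).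
have [h sh] : exists h, s' h = s B.+1.
  by apply/same; [apply: leq_trans (s_ge _) | exists B.+1].
exists B.+1, h; elim=> [|n IH]; first by rewrite !addn0.
have lt_s : B < s (B.+1 + n.+1) by apply: leq_trans (s_ge _); rewrite leq_addr.
have lt_s' : B < s' (h + n.+1).
  by have := s'_inc (h + n); have := s_ge (B.+1 + n); rewrite IH addnS; lia.
have [m sm] : exists m, s' m = s (B.+1 + n.+1) by apply/same => //; eexists.
have [m' sm'] : exists m', s m' = s' (h + n.+1) by apply/same => //; eexists.
have le_m : h + n.+1 <= m.
  by rewrite addnS ltnNge -s'_mono -ltnNge sm -IH addnS.
have le_m' : B.+1 + n.+1 <= m'.
  by rewrite addnS ltnNge -s_mono -ltnNge sm' IH addnS.
by apply/eqP; rewrite eqn_leq -{1}sm' s_mono le_m' -sm s'_mono le_m.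
Qed.

Section Words.
Variable p : nat.
Implicit Types (w t x y z : word p) (c d i : 'I_p.+1).

Definition wcons c w : word p := fun k => if k is k'.+1 then w k' else c.
Definition wbehead w : word p := fun k => w k.+1.

Lemma wcons_head_behead w : wcons (w 0) (wbehead w) = w.
Proof. by apply: functional_extensionality => -[]. Qed.

Lemma wcons_inj c : injective (wcons c).
Proof.
by move=> w1 w2 e; apply: functional_extensionality => k; apply: (congr1 (fun w => w k.+1) e).
Qed.

Lemma allzero_beforeP w n : allzero_before w n <-> forall m, m < n -> w m = ord0.
Proof.
split=> [/allP zw m mn|zw]; first by apply/eqP/zw; rewrite mem_iota.
by apply/allP => m; rewrite mem_iota => /andP [_ mn]; apply/eqP/zw.
Qed.

Lemma gen_e_first_nz i x q : x q != ord0 -> (forall m, m < q -> x m = ord0) ->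
  forall k, gen_e i x k =
    if k < q then i else if k == q then (if x q == i then ord0 else x q) else x k.
Proof.
move=> xq zx k; rewrite /gen_e; case: ltngtP => [kq|qk|->].
- by rewrite (iffRL (allzero_beforeP _ _)) ?zx // => m mk; apply: zx; apply: ltn_trans kq.
- case: (boolP (allzero_before x k)) => // /allzero_beforeP zk.
  by move: xq; rewrite zk ?eqxx.
- by rewrite (iffRL (allzero_beforeP _ _)) // (negbTE xq).
Qed.

Lemma gen_e_changed i x k : gen_e i x k <> x k ->
  forall m, m < k -> x m = ord0 /\ gen_e i x m = i.
Proof.
rewrite /gen_e; case: ifP => [/allzero_beforeP zk _|//] m mk.
have zm : allzero_before x m by apply/allzero_beforeP => m' m'm; apply: zk; apply: ltn_trans mk.
by rewrite zm zk // eqxx.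
Qed.

Lemma allzero_before_wcons c w k :
  allzero_before (wcons c w) k.+1 = (c == ord0) && allzero_before w k.
Proof. by rewrite /allzero_before /= -(addn0 1) iotaDl all_map. Qed.

Lemma gen_e_wcons0 c w : gen_e c (wcons ord0 w) = wcons c (gen_e c w).
Proof.
apply: functional_extensionality => -[|k] //.
by rewrite /gen_e allzero_before_wcons eqxx.
Qed.

Lemma gen_e_wcons_self c w : c != ord0 -> gen_e c (wcons c w) = wcons ord0 w.
Proof.
move=> c0; apply: functional_extensionality => -[|k].
  by rewrite /gen_e /= (negbTE c0) eqxx.
by rewrite /gen_e allzero_before_wcons (negbTE c0).
Qed.

Lemma gen_e_id c t : t 0 != ord0 -> t 0 != c -> gen_e c t = t.
Proof.
move=> t0 tc; apply: functional_extensionality => k; rewrite (gen_e_first_nz c t0) // ltn0.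
by case: eqP => [->|//]; rewrite (negbTE tc).
Qed.

(* [odometer c M t n] writes the binary digits of [n < 2 ^ M], least significant
   first, in its first [M] letters ([c] for the digit 0 and [ord0] for the digit 1)
   and continues with [t] from position [M] on; [gen_e c] then acts as [n |-> n + 1]
   modulo [2 ^ M], so the words [odometer c M t n] form a single [e_c]-cycle. *)
Fixpoint odometer c M t n : word p :=
  if M is M'.+1 then wcons (if odd n then ord0 else c) (odometer c M' (wbehead t) n./2)
  else t.

Definition zero_prefix M t : word p := fun k => if k < M then ord0 else t k.

Definition agree_from M t y := forall k, M <= k -> y k = t k.

Lemma odometer_agree c M t n : agree_from M t (odometer c M t n).
Proof. by elim: M t n => [//|M IH] t n [|k] //= Mk; apply: IH. Qed.

Lemma odometer_prefix c M t n k : k < M -> odometer c M t n k = ord0 \/ odometer c M t n k = c.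
Proof.
elim: M t n k => [//|M IH] t n [|k] /= Mk; last exact: IH.
by case: odd; [left | right].
Qed.

Lemma predn_exp2S M : (2 ^ M.+1).-1 = true + ((2 ^ M).-1).*2.
Proof. by rewrite expnS -muln2; have := expn_gt0 2 M; lia. Qed.

Lemma odometer_last c M t : odometer c M t (2 ^ M).-1 = zero_prefix M t.
Proof.
apply: functional_extensionality => k; rewrite /zero_prefix.
case: ltnP => [kM|/odometer_agree //].
elim: M t k kM => [//|M IH] t [|k] /= kM; rewrite predn_exp2S.
  by rewrite oddD odd_double.
by rewrite half_bit_double IH.
Qed.

Lemma odometer_inj c M t n1 n2 : c != ord0 ->
  n1 < 2 ^ M -> n2 < 2 ^ M -> odometer c M t n1 = odometer c M t n2 -> n1 = n2.
Proof.
move=> c0; elim: M t n1 n2 => [|M IH] t n1 n2 /=; first by rewrite expn0; lia.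
rewrite expnS => n1M n2M e.
have odd12 : odd n1 = odd n2.
  move: (congr1 (fun w => w 0) e) => /=.
  by case: (odd n1); case: (odd n2) => // e0; move: c0; rewrite e0 eqxx.
have half12 : n1./2 = n2./2.
  rewrite odd12 in e; apply: (IH (wbehead t)) (wcons_inj e).
    by rewrite ltn_half_double -muln2 mulnC.
  by rewrite ltn_half_double -muln2 mulnC.
by rewrite -(odd_double_half n1) -(odd_double_half n2) odd12 half12.
Qed.

Lemma odometer_surj c M t y : agree_from M t y ->
  (forall k, k < M -> y k = ord0 \/ y k = c) -> exists2 n, n < 2 ^ M & odometer c M t n = y.
Proof.
elim: M t y => [|M IH] t y /= yt yc.
  by exists 0 => //; apply: functional_extensionality => k; rewrite yt.
have [n nM en] : exists2 n, n < 2 ^ M & odometer c M (wbehead t) n = wbehead y.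
  by apply: IH => k kM; [apply: yt | apply: yc].
exists ((y 0 == ord0) + n.*2); first by rewrite expnS; case: (y 0 == ord0); lia.
rewrite half_bit_double en oddD odd_double addbF -[RHS]wcons_head_behead; congr wcons.
by case: (yc 0 isT) => ->; rewrite ?eqxx //; case: eqP.
Qed.

Lemma adj_sym x y : adj x y -> adj y x.
Proof. by case=> i [i0 [e|e]]; exists i; split=> //; [right | left]. Qed.

Lemma adj_gen_e c x : c != ord0 -> adj x (gen_e c x).
Proof. by move=> c0; exists c; split=> //; left. Qed.

Lemma reach_closed w : closed_under (@adj p) (reach w).
Proof. by move=> x y wx xy; apply: rt_trans wx (rt_step _ _ _ _ xy). Qed.

Section OdometerCycle.
Variables (c : 'I_p.+1) (M : nat) (t : word p).
Hypotheses (c0 : c != ord0) (tM0 : t M != ord0) (tMc : t M != c).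

Lemma gen_e_odometer n : n.+1 < 2 ^ M -> gen_e c (odometer c M t n) = odometer c M t n.+1.
Proof.
elim: M t tM0 tMc n => [|M' IH] t' t0 tc n /=; first by rewrite expn0.
rewrite expnS; case odd_n: (odd n) => nM.
  rewrite gen_e_wcons0 /= uphalf_half odd_n IH //.
  by move: nM; rewrite -{1}(odd_double_half n) odd_n -muln2; lia.
by rewrite gen_e_wcons_self //= uphalf_half odd_n.
Qed.

Lemma gen_e_odometer_last : gen_e c (odometer c M t (2 ^ M).-1) = odometer c M t 0.
Proof.
elim: M t tM0 tMc => [|M' IH] t' t0 tc /=; first exact: gen_e_id.
by rewrite predn_exp2S half_bit_double oddD odd_double /= gen_e_wcons0 IH.
Qed.

Lemma conn_in_odometer (P : word p -> Prop) n1 n2 : n1 <= n2 -> n2 < 2 ^ M ->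
  (forall n, n1 <= n <= n2 -> P (odometer c M t n)) ->
  conn_in (@adj p) P (odometer c M t n1) (odometer c M t n2).
Proof.
move=> le12 n2M; apply: conn_in_path => // n nn.
by rewrite -gen_e_odometer; [apply: adj_gen_e | lia].
Qed.

Lemma conn_in_odometer_avoid z n1 n2 : n1 < 2 ^ M -> n2 < 2 ^ M ->
  odometer c M t n1 <> z -> odometer c M t n2 <> z ->
  conn_in (@adj p) (fun a => a <> z) (odometer c M t n1) (odometer c M t n2).
Proof.
apply: conn_in_cycle => [|n nM||]; first exact: adj_sym.
- by rewrite -gen_e_odometer //; apply: adj_gen_e.
- by rewrite -gen_e_odometer_last; apply: adj_gen_e.
- by move=> n m nM mM; apply: odometer_inj.
Qed.

End OdometerCycle.

Lemma first_nz y r : y r != ord0 ->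
  exists q, [/\ q <= r, y q != ord0 & forall m, m < q -> y m = ord0].
Proof.
move=> yr; have ex : exists n, y n != ord0 by exists r.
case: (ex_minnP ex) => q yq minq; exists q; split=> [|//|m mq]; first exact: minq.
by apply/eqP; apply: contraTT mq => /minq; rewrite -leqNgt.
Qed.

Lemma last_nz y M : (exists2 k, k < M & y k != ord0) ->
  exists r, [/\ r < M, y r != ord0 & forall k, r < k < M -> y k = ord0].
Proof.
move=> [k kM yk].
have ex : exists n, (n < M) && (y n != ord0) by exists k; rewrite kM.
have ub n : (n < M) && (y n != ord0) -> n <= M by case/andP=> /ltnW.
case: (ex_maxnP ex ub) => r /andP [rM yr] maxr; exists r; split=> // m /andP [rm mM].
by apply/eqP; apply: contraTT rm => ym; rewrite -leqNgt maxr // mM.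
Qed.

(* The component of [zero_prefix M t] minus that vertex which contains [odometer c M t 0]:
   words agreeing with [t] from [M] on whose last nonzero letter before [M] is [c]. *)
Definition lobe M c t y :=
  agree_from M t y /\ exists r, [/\ r < M, y r = c & forall k, r < k < M -> y k = ord0].

Lemma zero_prefix_not_lobe M c t : c != ord0 -> ~ lobe M c t (zero_prefix M t).
Proof. by move=> c0 [_ [r [rM yr _]]]; move: c0; rewrite -yr /zero_prefix rM eqxx. Qed.

Lemma lobe_letter_unique M c d t y : c != ord0 -> d != ord0 ->
  lobe M c t y -> lobe M d t y -> c = d.
Proof.
move=> c0 d0 [_ [r1 [r1M y1 z1]]] [_ [r2 [r2M y2 z2]]].
case: (ltngtP r1 r2) => [lt12|lt21|e12]; last by rewrite -y1 -y2 e12.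
  by move: d0; rewrite -y2 z1 ?eqxx // lt12.
by move: c0; rewrite -y1 z2 ?eqxx // lt21.
Qed.

Lemma lobe_exists M t y : agree_from M t y -> y <> zero_prefix M t ->
  exists2 c, c != ord0 & lobe M c t y.
Proof.
move=> yt ne.
have [|r [rM yr zr]] := last_nz (y := y) (M := M).
  apply: NNPP => nz; apply: ne; apply: functional_extensionality => k.
  rewrite /zero_prefix; case: ltnP => [kM|/yt //].
  by apply/eqP; apply: contraT => yk; case: nz; exists k.
by exists (y r) => //; split=> //; exists r.
Qed.

Lemma lobe_gen_e M c t i y : c != ord0 -> lobe M c t y ->
  gen_e i y <> zero_prefix M t -> lobe M c t (gen_e i y).
Proof.
move=> c0 [yt [r [rM yr zr]]] ne.
have [q [qr yq zq]] : exists q, [/\ q <= r, y q != ord0 & forall m, m < q -> y m = ord0].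
  by apply: first_nz; rewrite yr.
have G := gen_e_first_nz i yq zq.
have keep k : q < k -> gen_e i y k = y k by move=> qk; rewrite G ltnNge ltnW // gtn_eqF.
split=> [k Mk|]; first by rewrite keep ?yt //; lia.
case: (ltnP q r) => [lt_qr|le_rq].
  by exists r; split=> [//||k rk]; rewrite keep ?yr ?zr //; lia.
have {le_rq qr} eq_qr : q = r by lia.
subst q; case: (eqVneq i c) => [ic|ic]; last first.
  exists r; split=> // [|k rk]; first by rewrite G ltnn eqxx yr eq_sym (negbTE ic).
  by rewrite keep ?zr //; lia.
case: r rM yr zr G keep yq zq => [|r] rM yr zr G keep _ _.
  case: ne; apply: functional_extensionality => -[|k]; rewrite G /zero_prefix /=.
    by rewrite rM yr ic eqxx.
  by case: ltnP => kM; [rewrite zr | rewrite yt].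
exists r; split=> [|//|k /andP [rk kM]]; first lia; first by rewrite G ltnSn ic.
case: (eqVneq k r.+1) => [->|kr]; first by rewrite G ltnn eqxx yr ic eqxx.
by rewrite keep ?zr //; lia.
Qed.

Fixpoint lobe_card M := if M is M'.+1 then p.+1 * lobe_card M' + 1 else 0.

Lemma has_card_behead (Q : word p -> Prop) n :
  has_card Q n -> has_card (fun y => Q (wbehead y)) (p.+1 * n).
Proof.
move=> Qn.
suff on_letters ls : uniq ls -> has_card (fun y => y 0 \in ls /\ Q (wbehead y)) (size ls * n).
  have := on_letters _ (enum_uniq 'I_p.+1); rewrite size_enum_ord.
  by apply: has_card_ext => y; rewrite mem_enum; split=> [[]|].
elim: ls => [_|c ls IH /andP [cls Uls]]; first by apply: has_card0 => y [].
rewrite mulSn; apply: has_card_ext (has_cardU _ (has_card_image (f := wcons c) _ Qn) (IH Uls)).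
- move=> y; rewrite in_cons; split=> [[[x Qx ->]|[yls Qy]]|[/orP [/eqP y0|yls] Qy]].
  + by split=> //=; rewrite eqxx.
  + by rewrite yls orbT.
  + by left; exists (wbehead y); rewrite // -y0 wcons_head_behead.
  + by right.
- by move=> y [x _ ->] [/= cls'  _]; move: cls; rewrite cls'.
- by move=> x1 x2 _ _; apply: wcons_inj.
Qed.

Lemma lobeS M c t y : c != ord0 ->
  lobe M.+1 c t y <-> lobe M c (wbehead t) (wbehead y) \/ y = wcons c (zero_prefix M (wbehead t)).
Proof.
move=> c0; split=> [[yt [[|r] [rM yr zr]]]|[[yt [r [rM yr zr]]]|->]].
- right; apply: functional_extensionality => -[|k] //=; rewrite /zero_prefix /wbehead.
  by case: ltnP => kM; [apply: zr | apply: yt].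
- by left; split=> [k Mk|]; [apply: yt | exists r; split=> // k rk; apply: zr].
- by split=> [[|k] Mk|]; [| apply: yt | exists r.+1; split=> // -[|k] rk; [|apply: zr]].
- split=> [[|k] //= Mk|]; first by rewrite /zero_prefix ltnNge -ltnS Mk.
  by exists 0; split=> // -[|k] //= kM; rewrite /zero_prefix -ltnS kM.
Qed.

Lemma lobe_has_card M c t : c != ord0 -> has_card (lobe M c t) (lobe_card M).
Proof.
move=> c0; elim: M t => [|M IH] t /=; first by apply: has_card0 => y [_ [r [] ]].
apply: has_card_ext (has_cardU _ (has_card_behead (IH (wbehead t)))
  (has_card1 (wcons c (zero_prefix M (wbehead t))))) => [y|y].
  exact: iff_sym (lobeS _ _ _ c0).
by move=> + ey; rewrite ey; apply: zero_prefix_not_lobe.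
Qed.

Lemma agree_has_card M t : has_card (agree_from M t) (p.+1 ^ M).
Proof.
elim: M t => [|M IH] t.
  apply: has_card_ext (has_card1 t) => y; split=> [->//|yt].
  by apply: functional_extensionality => k; apply: yt.
rewrite expnS; apply: has_card_ext (has_card_behead (IH (wbehead t))) => y.
by split=> yt [|k] // Mk; apply: yt.
Qed.

Section Lobe.
Variables (M : nat) (c : 'I_p.+1) (t : word p).
Hypotheses (c0 : c != ord0) (tM0 : t M != ord0) (tMc : t M != c).

Lemma lobe_gen_e_inv i y : lobe M c t (gen_e i y) -> y <> zero_prefix M t -> lobe M c t y.
Proof.
move=> Ly ne; have [gt [r [rM gr _]]] := Ly.
suff yt : agree_from M t y.
  have [d d0 Ld] := lobe_exists yt ne.
  have ne' : gen_e i y <> zero_prefix M t.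
    by move=> e; apply: (@zero_prefix_not_lobe M c t c0); rewrite -e.
  by rewrite (lobe_letter_unique c0 d0 Ly (lobe_gen_e d0 Ld ne')).
case: (classic (exists2 m, m <= M & y m != ord0)) => [[m mM ym]|all0]; last first.
  have zy m : m <= M -> y m = ord0.
    by move=> mM; apply/eqP; apply: contraT => ym; case: all0; exists m.
  have gi m : m <= M -> gen_e i y m = i.
    move=> mM; rewrite /gen_e zy // eqxx (iffRL (allzero_beforeP _ _)) // => m' m'm.
    by apply: zy; apply: leq_trans mM; apply: ltnW.
  by move: tMc; rewrite -gt // gi // -gr gi ?eqxx //; apply: ltnW.
have [q [qm yq zq]] := first_nz ym.
have G := gen_e_first_nz i yq zq.
have keep k : q < k -> y k = gen_e i y k by move=> qk; rewrite G ltnNge ltnW // gtn_eqF.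
case: (ltnP q M) => [qM k Mk|Mq]; first by rewrite keep ?gt //; apply: leq_trans Mk.
have {Mq qm mM} eqM : q = M by apply/eqP; rewrite eqn_leq Mq (leq_trans qm mM).
subst q; case: ne; apply: functional_extensionality => k; rewrite /zero_prefix.
case: ltngtP => [kM|Mk|->]; [exact: zq | by rewrite keep ?gt // ltnW |].
by move: (gt M (leqnn M)); rewrite G ltnn eqxx; case: eqP => // _ e; move: tM0; rewrite -e eqxx.
Qed.

Lemma lobe_adj y y' : lobe M c t y -> adj y y' -> y' <> zero_prefix M t -> lobe M c t y'.
Proof.
move=> Ly [i [_ [->|e]]] ne; first exact: lobe_gen_e.
by rewrite e in Ly; apply: lobe_gen_e_inv Ly ne.
Qed.

Lemma lobe_odometer n : n < (2 ^ M).-1 -> lobe M c t (odometer c M t n).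
Proof.
move=> nM; split; first exact: odometer_agree.
have [|r [rM yr zr]] := last_nz (y := odometer c M t n) (M := M).
  apply: NNPP => nz; suff en : n = (2 ^ M).-1 by move: nM; rewrite en ltnn.
  apply: (odometer_inj (M := M) (t := t) c0); [lia | by rewrite prednK ?expn_gt0 |].
  rewrite odometer_last; apply: functional_extensionality => k; rewrite /zero_prefix.
  case: ltnP => [kM|/odometer_agree //].
  by apply/eqP; apply: contraT => nzk; case: nz; exists k.
by exists r; split=> //; case: (@odometer_prefix c M t n r rM) yr => ->; rewrite ?eqxx.
Qed.

Lemma lobe_agree M' y y' : lobe M c t y -> M' < M -> y M' != ord0 ->
  agree_from M' y y' -> lobe M c t y'.
Proof.
move=> [yt [r [rM yr zr]]] M'M yM' y'y.
have M'r : M' <= r.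
  by rewrite leqNgt; apply/negP => rM'; move: yM'; rewrite zr ?eqxx // rM' M'M.
split=> [k Mk|]; first by rewrite y'y ?yt //; apply: leq_trans Mk; apply: ltnW.
exists r; split=> [//||k /andP [rk kM]]; first by rewrite y'y.
by rewrite y'y ?zr ?rk //; apply: leq_trans M'r (ltnW rk).
Qed.

Lemma lobe_conn_zero_prefix M' d y : lobe M c t y -> d != ord0 -> M' < M ->
  y M' != ord0 -> y M' != d -> (forall m, m < M' -> y m = ord0 \/ y m = d) ->
  conn_in (@adj p) (lobe M c t) y (zero_prefix M' y).
Proof.
move=> Ly d0 M'M yM'0 yM'd pre.
have [n nM' en] := @odometer_surj d M' y y (fun _ _ => erefl) pre.
have last_lt : (2 ^ M').-1 < 2 ^ M' by rewrite prednK ?expn_gt0.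
rewrite -{1}en -(odometer_last d); apply: conn_in_odometer => //.
  by rewrite -ltnS (leq_trans nM') // -[X in X <= _]prednK ?expn_gt0.
by move=> n' _; apply: lobe_agree Ly M'M yM'0 (@odometer_agree d M' y n').
Qed.

Lemma lobe_conn_on_cycle y : lobe M c t y -> (forall m, m < M -> y m = ord0 \/ y m = c) ->
  conn_in (@adj p) (lobe M c t) y (odometer c M t 0).
Proof.
move=> [yt [r [rM yr _]]] pre; have [n nM en] := odometer_surj yt pre.
have n_lt : n < (2 ^ M).-1.
  rewrite ltnNge; apply/negP => le_n; move: c0; rewrite -yr -en.
  by rewrite (_ : n = (2 ^ M).-1) ?odometer_last /zero_prefix ?rM ?eqxx //; lia.
rewrite -en; apply: (conn_in_sym adj_sym).
by apply: conn_in_odometer => // n' /andP [_ n'n]; apply: lobe_odometer; lia.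
Qed.

(* Induction on the position [q0] of the first nonzero letter [d]: the odometer of [d]
   along the maximal prefix over {0, d} moves it strictly to the right, unless that
   prefix reaches [M], in which case the word lies on the [e_c]-cycle itself. *)
Lemma lobe_conn y : lobe M c t y -> conn_in (@adj p) (lobe M c t) y (odometer c M t 0).
Proof.
suff conn_from q : forall y, (forall m, m < q -> y m = ord0) -> lobe M c t y ->
    conn_in (@adj p) (lobe M c t) y (odometer c M t 0) by apply: (conn_from 0).
have [e le_e] := ubnP (M - q); elim: e q le_e => [//|e IH] q le_e {}y zq Ly.
have [_ [r [rM yr _]]] := Ly.
have [q0 [_ yq0 zq0]] : exists q0, [/\ q0 <= r, y q0 != ord0 & forall m, m < q0 -> y m = ord0].
  by apply: first_nz; rewrite yr.
have qq0 : q <= q0 by rewrite leqNgt; apply/negP => q0q; move: yq0; rewrite zq ?eqxx.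
set d := y q0 in yq0.
case: (classic (exists m, (m < M) && (y m != ord0) && (y m != d))) => [ex|noex].
  case: (ex_minnP ex) => M' /andP [/andP [M'M yM'0] yM'd] minM'.
  have pre m : m < M' -> y m = ord0 \/ y m = d.
    move=> mM'; case: (eqVneq (y m) ord0) => [|ym0]; first by left.
    case: (eqVneq (y m) d) => [|ymd]; first by right.
    by have := minM' m; rewrite (ltn_trans mM' M'M) ym0 ymd => /(_ isT); rewrite leqNgt mM'.
  have q0M' : q0 < M'.
    rewrite ltnNge leq_eqVlt; apply/negP => /orP [/eqP eM'|M'q0].
      by move: yM'd; rewrite eM' eqxx.
    by move: yM'0; rewrite zq0 ?eqxx.
  apply: rt_trans (lobe_conn_zero_prefix Ly yq0 M'M yM'0 yM'd pre) (IH M' _ _ _ _).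
  - by move: le_e; rewrite ltnS; lia.
  - by move=> m mM'; rewrite /zero_prefix mM'.
  - by apply: lobe_agree Ly M'M yM'0 _ => k; rewrite /zero_prefix ltnNge => ->.
apply: lobe_conn_on_cycle => // m mM.
case: (eqVneq (y m) ord0) => [|ym0]; [by left | right].
have dc : d = c.
  by apply: NNPP => dc; apply: noex; exists r; rewrite rM yr c0 eq_sym; apply/eqP.
by rewrite -dc; apply/eqP; apply: contraT => ymd; case: noex; exists m; rewrite mM ym0 ymd.
Qed.

Lemma lobe_component x : lobe M c t x ->
  has_card (conn_in (@adj p) (fun a => a <> zero_prefix M t) x) (lobe_card M).
Proof.
move=> Lx; apply: has_card_ext (lobe_has_card M t c0) => y; split=> [Ly|].
  have not_cut a : lobe M c t a -> a <> zero_prefix M t.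
    by move=> La ea; move: La; rewrite ea; apply: zero_prefix_not_lobe.
  apply: conn_in_mono not_cut _; apply: rt_trans (lobe_conn Lx) _.
  exact: (conn_in_sym adj_sym (lobe_conn Ly)).
move=> xy; elim: xy Lx => [a b [ab [_ b_cut]] La|//|a b d _ IHab _ IHbd La].
  exact: lobe_adj La ab b_cut.
exact: IHbd (IHab La).
Qed.

Lemma lobe_conn_cut x : lobe M c t x -> conn_in (@adj p) (agree_from M t) x (zero_prefix M t).
Proof.
move=> Lx; have lobe_agree_from a : lobe M c t a -> agree_from M t a by case.
apply: rt_trans (conn_in_mono lobe_agree_from (lobe_conn Lx)) _.
rewrite -(odometer_last c); apply: conn_in_edge; last exact: odometer_agree.
- by apply: adj_sym; rewrite -gen_e_odometer_last //; apply: adj_gen_e.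
- exact: odometer_agree.
Qed.

End Lobe.

Lemma lobe_card_leq : {mono lobe_card : m n / m <= n}.
Proof. by apply: leq_mono; apply: homo_ltn ltn_trans _ => M /=; rewrite addn1 ltnS leq_pmull. Qed.

Lemma lobe_card_inj : injective lobe_card.
Proof.
by move=> m n e; apply/eqP; rewrite eqn_leq -[m <= n]lobe_card_leq -[n <= m]lobe_card_leq e leqnn.
Qed.

(* [N j] is the paper's [N_(j+1)]; the [(j+2)]-nd cycle of the path of cycles is the
   [e_(w (N j))]-cycle of the words [odometer (w (N j)) (N j.+1) w n], which passes
   through [zero_prefix (N j) w] and [zero_prefix (N j.+1) w]. *)
Definition cycle_marks w (N : nat -> nat) :=
  [/\ forall j, N j < N j.+1, forall j, w (N j) != ord0, forall j, w (N j.+1) != w (N j)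
    & forall j m, N j < m < N j.+1 -> w m = ord0 \/ w m = w (N j)].

Lemma decomp_marks w k a us :
  is_decomp w k a us -> cycle_marks w (fun j => size (dec_prefix k a us j)).
Proof.
move=> [a0 [aS [uj wpre]]].
have pS j : dec_prefix k a us j.+1 = dec_prefix k a us j ++ a j.+1 :: us j.+1.
  by rewrite /dec_prefix -[j.+2]addn1 iotaD map_cat flatten_cat catA /= cats0.
have w_at j : w (size (dec_prefix k a us j)) = a j.+1.
  by rewrite (wpre j.+1) pS ?nth_cat ?ltnn ?subnn // size_cat /= addnS ltnS leq_addr.
split=> [j|j|j|j m /andP [lo hi]] /=.
- by rewrite pS size_cat /= addnS ltnS leq_addr.
- by rewrite w_at.
- by rewrite !w_at.
have : 0 < m - size (dec_prefix k a us j) by rewrite subn_gt0.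
rewrite (wpre j.+1) // pS nth_cat [m < _]ltnNge (ltnW lo) w_at /=.
case E: (m - _) => [//|i] _ /=.
have iu : i < size (us j.+1) by move: hi; rewrite pS size_cat /=; lia.
by case/orP: (allP (uj j.+1) _ (mem_nth ord0 iu)) => /eqP ->; [left | right].
Qed.

Section Marks.
Variables (w : word p) (N : nat -> nat).
Hypothesis marks : cycle_marks w N.

Lemma marks_leq : {mono N : i j / i <= j}.
Proof. by have [N_inc _ _ _] := marks; apply: leq_mono; apply: homo_ltn ltn_trans N_inc. Qed.

Lemma marks_ltn : {mono N : i j / i < j}.
Proof. by move=> i j; rewrite !ltnNge marks_leq. Qed.

(* A move rewrites only the letters up to the first nonzero one, so it cannot reach
   past two consecutive marks, whose letters are nonzero and distinct. *)
Lemma agree_adj J y z : agree_from (N J) w y -> adj y z -> agree_from (N J.+2) w z.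
Proof.
have [_ w0 wS _] := marks.
have lt0 : N J < N J.+2 by rewrite marks_ltn.
have lt1 : N J.+1 < N J.+2 by rewrite marks_ltn.
move=> yw [i [_ [-> | ey]]] m Mm.
  case: (eqVneq (gen_e i y m) (y m)) => [->|/eqP /gen_e_changed ch].
    by apply: yw; rewrite (leq_trans _ Mm) // ltnW.
  by move: (w0 J); rewrite -yw // (ch _ (leq_trans lt0 Mm)).1 eqxx.
case: (eqVneq (gen_e i z m) (z m)) => [<-|/eqP /gen_e_changed ch].
  by rewrite -ey; apply: yw; rewrite (leq_trans _ Mm) // ltnW.
have yJ : y (N J) = w (N J) by apply: yw.
have yJ1 : y (N J.+1) = w (N J.+1) by apply: yw; rewrite marks_leq.
move: (wS J); rewrite -yJ -yJ1 ey (ch _ (leq_trans lt0 Mm)).2 (ch _ (leq_trans lt1 Mm)).2.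
by rewrite eqxx.
Qed.

Lemma orbit_agree x : reach w x -> exists J, agree_from (N J) w x.
Proof.
suff agree_rt y z : clos_refl_trans _ (@adj p) y z ->
    (exists J, agree_from (N J) w y) -> exists J, agree_from (N J) w z.
  by move/agree_rt; apply; exists 0.
elim=> [a b ab [J aJ]|//|a b d _ IHab _ IHbd /IHab /IHbd //].
by exists J.+2; apply: agree_adj aJ ab.
Qed.

Lemma lobe_of_agree x J j : agree_from (N J) w x -> J <= j -> lobe (N j.+1) (w (N j)) w x.
Proof.
have [N_inc w0 _ wmid] := marks.
move=> xw Jj; have xj : x (N j) = w (N j) by apply: xw; rewrite marks_leq.
split=> [k Mk|]; first by apply: xw; apply: leq_trans Mk; rewrite marks_leq (leq_trans Jj).
have [|r [rM xr zr]] := last_nz (y := x) (M := N j.+1); first by exists (N j); rewrite ?xj.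
have jr : N j <= r.
  rewrite leqNgt; apply/negP => rj; move: (w0 j); rewrite -xj zr ?eqxx //.
  by rewrite rj N_inc.
exists r; split=> //; move: jr; rewrite leq_eqVlt => /orP [/eqP <- //|jr].
have := wmid j r; rewrite jr rM -xw; last by rewrite (leq_trans _ (ltnW jr)) // marks_leq.
by case=> // x0; move: xr; rewrite x0 eqxx.
Qed.

Lemma zero_prefix_marks_inj : injective (fun j => zero_prefix (N j) w).
Proof.
have [_ w0 _ _] := marks.
suff lt_neq m n : m < n -> zero_prefix (N m) w <> zero_prefix (N n) w.
  move=> m n e; case: (ltngtP m n) => // mn; first by case: (lt_neq _ _ mn e).
  by case: (lt_neq _ _ mn (esym e)).
move=> mn /(congr1 (fun y => y (N m))); rewrite /zero_prefix ltnn marks_ltn mn.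
by move=> wm; move: (w0 m); rewrite wm eqxx.
Qed.

Lemma zero_prefix_marks_conn j z : z <> zero_prefix (N j) w -> z <> zero_prefix (N j.+1) w ->
  conn_in (@adj p) (fun a => a <> z) (zero_prefix (N j) w) (zero_prefix (N j.+1) w).
Proof.
have [N_inc w0 wS wmid] := marks.
set M := N j.+1; move=> zj zj1.
have [n nM en] : exists2 n, n < 2 ^ M & odometer (w (N j)) M w n = zero_prefix (N j) w.
  apply: odometer_surj => [k Mk|k kM].
    by rewrite /zero_prefix ltnNge (leq_trans (ltnW (N_inc j)) Mk).
  rewrite /zero_prefix; case: ltngtP => [kj|jk|->]; [by left | | by right].
  by apply: wmid; rewrite jk.
rewrite -en -(odometer_last (w (N j))).
apply: conn_in_odometer_avoid; rewrite ?en ?odometer_last //.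
- exact: w0.
- exact: wS.
- by rewrite prednK ?expn_gt0.
- by move/esym.
- by move/esym.
Qed.

Lemma zero_prefix_marks_chain j n z : (forall i : nat, z <> zero_prefix (N i) w) ->
  conn_in (@adj p) (fun a => a <> z) (zero_prefix (N j) w) (zero_prefix (N (j + n)) w).
Proof.
move=> zN; elim: n => [|n IH]; first by rewrite addn0; apply: rt_refl.
by apply: rt_trans IH _; rewrite addnS; exact: (zero_prefix_marks_conn (zN _) (zN _)).
Qed.

Lemma cut_size_lobe x J j : reach w x -> agree_from (N J) w x -> J <= j ->
  cut_size (@adj p) (reach w) x (lobe_card (N j.+1)).
Proof.
have [_ w0 wS _] := marks.
move=> wx xJ Jj; have Lx := lobe_of_agree xJ Jj.
exists (zero_prefix (N j.+1) w); split.
- exact: rt_trans wx (conn_in_rt (lobe_conn_cut (w0 j) (w0 j.+1) (wS j) Lx)).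
- by move=> e; move: Lx; rewrite -e; apply: zero_prefix_not_lobe.
- exact: (lobe_component (w0 j) (w0 j.+1) (wS j) Lx).
Qed.

Lemma cut_sizes_eventually x : reach w x -> exists B, forall n, B < n ->
  cut_size (@adj p) (reach w) x n <-> exists j, lobe_card (N j) = n.
Proof.
have [_ w0 wS _] := marks.
move=> wx; have [J xJ] := orbit_agree wx.
have [l lP] : exists l, forall z, agree_from (N J.+1) w z -> In z l.
  by have [l [_ _ Pl]] := agree_has_card (N J.+1) w; exists l => z /Pl.
have [B HB] := has_card_bounded (fun z => conn_in (@adj p) (fun a => a <> z) x) l.
exists (maxn B (lobe_card (N J.+1))) => n; rewrite gtn_max => /andP [Bn Jn]; split.
  move=> [z [wz zx Cn]].
  case: (classic (agree_from (N J.+1) w z)) => [zJ|zJ].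
    by move: Bn; rewrite ltnNge (HB z n (lP z zJ) Cn).
  case: (classic (exists i : nat, z = zero_prefix (N i) w)) => [[i ez]|notZ].
    have Ji : J.+1 < i.
      rewrite ltnNge; apply/negP => iJ; apply: zJ => k Jk.
      by rewrite ez /zero_prefix ltnNge (leq_trans _ Jk) // marks_leq.
    case: i Ji ez => // i Ji ez; exists i.+1; rewrite ez in Cn; apply: has_card_unique _ Cn.
    by apply: (lobe_component (w0 i) (w0 i.+1) (wS i) (lobe_of_agree xJ _)); rewrite ltnW.
  have zN (i : nat) : z <> zero_prefix (N i) w by move=> e; apply: notZ; exists i.
  exfalso; apply: (has_card_no_inj_seq (h := fun i : nat => zero_prefix (N (J.+1 + i)) w) Cn).
    by move=> i1 i2 /zero_prefix_marks_inj /addnI.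
  move=> i; apply: rt_trans (zero_prefix_marks_chain _ _ zN).
  apply: conn_in_mono (lobe_conn_cut (w0 J) (w0 J.+1) (wS J) (lobe_of_agree xJ (leqnn J))).
  by move=> a aJ az; apply: zJ; rewrite -az.
move=> [j jn]; rewrite -jn ltnNge lobe_card_leq marks_leq -ltnNge in Jn.
case: j jn Jn => // j <- Jj; apply: cut_size_lobe wx xJ _.
by rewrite -ltnS ltnW.
Qed.

End Marks.

End Words.

Lemma schreier_iso_graph_iso p (u v : word p) :
  schreier_iso u v -> exists f, graph_iso (@adj p) (reach u) (@adj p) (reach v) f.
Proof.
move=> [f [g [fV [f_inj [f_surj [g_lab [_ [g_surj g_ends]]]]]]]].
exists f; split=> [//|//|y /f_surj [x [ux <-]]|x y ux uy]; first by exists x.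
split.
  have fwd a i : reach u a -> i != ord0 -> adj (f a) (f (gen_e i a)).
    move=> ua i0; have [_ j0] := g_lab a i ua i0.
    by exists (g (a, i)).2; split=> //; case: (g_ends a i ua i0) => /= -[<- <-]; [left | right].
  by case=> i [i0 [->|->]]; [apply: fwd | apply: adj_sym; apply: fwd].
have bwd a b j : reach u a -> reach u b -> j != ord0 -> f b = gen_e j (f a) -> adj a b.
  move=> ua ub j0 e; have [a0 [i [ua0 [i0 ga]]]] := g_surj (f a) j (fV a ua) j0.
  have ua0' : reach u (gen_e i a0) by apply: reach_closed ua0 (adj_gen_e _ i0).
  case: (g_ends a0 i ua0 i0); rewrite ga /= => -[e1 e2].
    have -> : a = a0 by apply: f_inj.
    have -> : b = gen_e i a0 by apply: f_inj => //; rewrite e -e2 e1.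
    exact: adj_gen_e.
  have -> : a = gen_e i a0 by apply: f_inj.
  have -> : b = a0 by apply: f_inj => //; rewrite e e1 -e1 e2.
  by apply: adj_sym; apply: adj_gen_e.
by case=> j [j0 [e|e]]; [apply: bwd e | apply: adj_sym; apply: bwd e].
Qed.

Theorem lemma4p19 (p : nat) (hp : 1 <= p) (u v : word p) :
  one_ended u -> one_ended v -> schreier_iso u v ->
  forall (k : nat) (a : nat -> 'I_p.+1) (us : nat -> seq 'I_p.+1)
         (k' : nat) (a' : nat -> 'I_p.+1) (us' : nat -> seq 'I_p.+1),
    is_decomp u k a us -> is_decomp v k' a' us' ->
    compatible (cycle_lengths k a us) (cycle_lengths k' a' us').
Proof.
move=> _ _ /schreier_iso_graph_iso [f f_iso] k a us k' a' us' /decomp_marks mu /decomp_marks mv.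
set N := fun j => _ in mu; set N' := fun j => _ in mv.
have uu : reach u u := rt_refl _ _ u.
have [Bu HBu] := cut_sizes_eventually mu uu.
have [fV _ _ _] := f_iso.
have [Bv HBv] := cut_sizes_eventually mv (fV u uu).
have lobe_card_marks_inc M (M_inc : forall j, M j < M j.+1) j :
    lobe_card p (M j) < lobe_card p (M j.+1).
  by rewrite ltnNge lobe_card_leq -ltnNge.
have [] : compatible (lobe_card p \o N) (lobe_card p \o N').
  apply: (compatible_of_same_range (B := maxn Bu Bv)) => [j|j|n].
  - by apply: lobe_card_marks_inc; have [] := mu.
  - by apply: lobe_card_marks_inc; have [] := mv.
  - rewrite gtn_max => /andP [Bun Bvn].
    by rewrite -HBu // -HBv //; apply: cut_size_isoE f_iso uu; apply: reach_closed.
move=> l [h lh]; exists l, h => n; rewrite /cycle_lengths; congr (2 ^ _).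
exact: lobe_card_inj (lh n).
Qed.
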